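(* Let $r\ge2$ and $R=\{1,2,r+1,r+2\}$. Then for all $n,k\ge1$, the number $L(n,k)^{-1}_R$ is either $0$ or has sign $(-1)^{n-k}$, i.e. $(-1)^{n-k}L(n,k)^{-1}_R\ge0$. Equivalently, the compositional inverse of $x+x^2+x^{r+1}+x^{r+2}$ has coefficient of $x^n$ of sign $(-1)^{n-1}$ or $0$ for every $n\ge1$.
   Context: For $R\subseteq\mathbb N$, $L(n,k)_R$ is the number of partitions of $[n]$ into $k$ lists (linearly ordered nonempty blocks) each of size in $R$, and $L(n,k)^{-1}_R$ is the $(n,k)$ entry of the inverse of the infinite lower-triangular matrix $[L(n,k)_R]_{n,k\ge1}$ (rows indexed by $n$). *)

From HB Require Import structures.
From mathcomp Require Import all_boot all_order all_algebra.
Set Implicit Arguments. Unset Strict Implicit. Unset Printing Implicit Defensive.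
Import Order.TTheory GRing.Theory Num.Theory.

(* A list (linearly ordered nonempty block) with entries in [n] = 'I_n is
   encoded by its "graph" X = {(a_0,0), (a_1,1), ..., (a_{j-1},j-1)}:
   each element occurs at most once, and the positions used are exactly
   0, ..., #|X|-1.  Nonemptiness: 0 < #|X|. *)
Definition is_list_on (n : nat) (X : {set 'I_n * 'I_n}) : bool :=
  [&& 0 < #|X|,
      [forall x : 'I_n, #|[set i : 'I_n | (x, i) \in X]| <= 1] &
      [forall i : 'I_n, (val i < #|X|) == [exists x : 'I_n, (x, i) \in X]]].

Definition list_partitions (R : pred nat) (n k : nat)
  : {set {set {set 'I_n * 'I_n}}} :=
  [set P : {set {set 'I_n * 'I_n}} |
    [&& #|P| == k,
        [forall X in P, is_list_on X && R #|X|] &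
        [forall x : 'I_n,
           #|[set X in P | [exists i : 'I_n, (x, i) \in X]]| == 1]]].

Definition Lnk (R : pred nat) (n k : nat) : nat := #|list_partitions R n k|.

Definition Lmat (R : pred nat) (m : nat) : 'M[rat]_m.+1 :=
  \matrix_(i < m.+1, j < m.+1) ((Lnk R i.+1 j.+1)%:R : rat).

(* L(n,k)^{-1}_R: (n,k) entry of the inverse of the infinite lower-triangular
   matrix; since the matrix is lower triangular, this is the (n,k) entry of
   the inverse of its n x n leading truncation (0 above the diagonal). *)
Definition Linv (R : pred nat) (n k : nat) : rat :=
  if (0 < k <= n)%N then invmx (Lmat R n.-1) (inord n.-1) (inord k.-1)
  else 0%R.

Definition Rset (r : nat) : pred nat := fun j => j \in [:: 1; 2; r.+1; r.+2]%N.

From HB Require Import structures.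
From mathcomp Require Import all_boot all_order all_algebra.
From mathcomp Require Import ring zify.
Import Order.TTheory GRing.Theory Num.Theory.

(* A j-set carries j! lists, so the exponential formula gives
   k! L(n,k) = n! [x^n] f^k for f = x + x^2 + x^(r+1) + x^(r+2): L is the
   exponential Riordan array of f, and its inverse is the array of the
   compositional inverse g of f, L^-1(n,k) = (n!/k!) [x^n] g^k.  It remains to
   see that -g has coefficients of alternating sign, a property stable under
   sums, products and nonnegative scalings.  As f = x(1+x)(1+x^r), g is the
   fixed point of g = x phi(-g), where
     phi(e) = 1/((1-e)(1+(-1)^r e^r))
            = (sum_(i<r) e^i + (1-(-1)^r) e^r/(1-e)) / (1-e^(2r))
   has nonnegative coefficients as a series in e.  Hence the Picard iterates
   keep -g alternating; the M-th one inverts f modulo x^M, which is all that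
   the finite truncations of L see. *)

Set Implicit Arguments.
Unset Strict Implicit.
Unset Printing Implicit Defensive.

Lemma sum_nat_bool (I : finType) (A : {pred I}) (b : pred I) :
  \sum_(i in A) (b i : nat) = #|[set i in A | b i]|.
Proof.
rewrite -sum1_card big_mkcond [RHS]big_mkcond /=; apply: eq_bigr => i _.
by rewrite !inE; case: (i \in A); case: (b i).
Qed.

Lemma card_ord_lt n m : m <= n -> #|[set i : 'I_n | i < m]| = m.
Proof.
move=> le_mn; have -> : [set i : 'I_n | i < m] = widen_ord le_mn @: 'I_m.
  apply/setP => i; rewrite inE; apply/idP/imsetP => [lt_im|[j _ ->]] /=.
    by exists (Ordinal lt_im) => //; apply: val_inj.
  exact: ltn_ord.
rewrite card_imset ?card_ord // => a b /(congr1 val) eab; exact: val_inj.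
Qed.

Section Lists.
Variable n : nat.
Local Notation T := ('I_n * 'I_n)%type.
Implicit Types (X : {set T}) (S : {set 'I_n}).

Definition is_list X : bool :=
  [forall x : 'I_n, #|[set i : 'I_n | (x, i) \in X]| <= 1] &&
  [forall i : 'I_n, (i < #|X|) == [exists x : 'I_n, (x, i) \in X]].

Lemma is_list_onE X : is_list_on X = (0 < #|X|) && is_list X.
Proof. by []. Qed.

Definition elems X : {set 'I_n} := [set p.1 | p in X].

Lemma mem_elems X y : (y \in elems X) = [exists i, (y, i) \in X].
Proof.
apply/imsetP/existsP => [[[a i] Xai /= ->]|[i Xyi]]; first by exists i.
by exists (y, i).
Qed.

Lemma list_pos_uniq X a i j : is_list X -> (a, i) \in X -> (a, j) \in X -> i = j.
Proof.
by case/andP => /forallP /(_ a) /card_le1_eqP pos_a _ Xai Xaj; apply: pos_a; rewrite inE.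
Qed.

Lemma card_elems X : is_list X -> #|elems X| = #|X|.
Proof.
move=> LX; apply: card_in_imset => [[a i] [b j]] Xai Xbj /= eab.
by rewrite eab in Xai *; rewrite (list_pos_uniq LX Xai Xbj).
Qed.

Lemma card_list_leq X : is_list X -> #|X| <= n.
Proof. by move=> LX; rewrite -card_elems // (leq_trans (max_card _)) ?card_ord. Qed.

Lemma list_elem_uniq X a b i : is_list X -> (a, i) \in X -> (b, i) \in X -> a = b.
Proof.
move=> LX Xai Xbi.
have pos_X : [set p.2 | p in X] = [set i : 'I_n | i < #|X|].
  case/andP: LX => _ /forallP posX; apply/setP => j; rewrite inE (eqP (posX j)).
  apply/imsetP/existsP => [[[c l] Xcl /= ->]|[c Xcj]]; first by exists c.
  by exists (c, j).
have /imset_injP inj2 : #|[set p.2 | p in X]| == #|X|.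
  by rewrite pos_X card_ord_lt // card_list_leq.
by have [] := inj2 _ _ Xai Xbi erefl.
Qed.

Definition lists_in S j : {set {set T}} :=
  [set X | [&& is_list X, #|X| == j & elems X \subset S]].

Lemma is_list_remove_last X x (p : 'I_n) :
  is_list X -> #|X| = p.+1 -> (x, p) \in X ->
  [&& is_list (X :\ (x, p)), #|X :\ (x, p)| == p & elems (X :\ (x, p)) \subset elems X :\ x].
Proof.
move=> LX cardX Xxp; have /andP [/forallP pos1 /forallP posX] := LX.
have cardX' : #|X :\ (x, p)| = p.
  by move: cardX; rewrite (cardsD1 (x, p)) Xxp add1n => -[].
rewrite cardX' eqxx /=; apply/andP; split; last first.
  apply/subsetP => y /imsetP [[a i] /setD1P [ne_ai Xai] /= ->].
  rewrite !inE; apply/andP; split; last by apply/imsetP; exists (a, i).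
  apply/eqP => eax; rewrite eax in ne_ai Xai.
  by move: ne_ai; rewrite (list_pos_uniq LX Xai Xxp) eqxx.
apply/andP; split.
  apply/forallP => y; apply: leq_trans (pos1 y); apply: subset_leq_card; apply/subsetP => i.
  by rewrite !inE => /andP [].
apply/forallP => i; rewrite cardX'; case: (ltnP i p) => [lt_ip|le_pi].
  have := posX i; rewrite cardX ltnS (ltnW lt_ip) eq_sym => /eqP/existsP [y Xyi].
  rewrite eq_sym eqb_id; apply/existsP; exists y; rewrite !inE Xyi andbT.
  by apply/eqP => -[_ eip]; rewrite eip ltnn in lt_ip.
rewrite eq_sym eqbF_neg; apply/negP => /existsP [y]; rewrite !inE => /andP [ne Xyi].
have : i < #|X| by rewrite (eqP (posX i)); apply/existsP; exists y.
rewrite cardX ltnS => le_ip.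
have eip : i = p by apply: val_inj; apply/eqP; rewrite eqn_leq le_ip le_pi.
by rewrite eip in ne Xyi; move: ne; rewrite (list_elem_uniq LX Xyi Xxp) eqxx.
Qed.

Lemma is_list_add_last X x (p : 'I_n) :
  is_list X -> #|X| = p -> x \notin elems X ->
  [&& is_list ((x, p) |: X), #|(x, p) |: X| == p.+1 & elems ((x, p) |: X) == x |: elems X].
Proof.
move=> LX cardX xX; have /andP [_ /forallP posX] := LX.
have Xxp : (x, p) \notin X by apply: contra xX => Xxp; apply/imsetP; exists (x, p).
have cardX' : #|(x, p) |: X| = p.+1 by rewrite cardsU1 Xxp cardX.
rewrite cardX' eqxx /= /elems imsetU1 eqxx andbT; apply/andP; split; apply/forallP.
  move=> y; apply/card_le1_eqP => i1 i2; rewrite !inE.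
  have [->|ne_yx] := eqVneq y x.
    have pos_x i : ((x, i) == (x, p)) || ((x, i) \in X) -> i = p.
      case/orP => [/eqP [] //|Xxi].
      by case/negP: xX; apply/imsetP; exists (x, i).
    by move=> /pos_x -> /pos_x ->.
  have inX i : ((y, i) == (x, p)) || ((y, i) \in X) -> (y, i) \in X.
    by case/orP => [/eqP [eyx _]|//]; rewrite eyx eqxx in ne_yx.
  by move=> /inX Xyi1 /inX Xyi2; rewrite (list_pos_uniq LX Xyi1 Xyi2).
move=> i; rewrite cardX'; have [->|ne_ip] := eqVneq i p.
  by rewrite ltnSn eq_sym eqb_id; apply/existsP; exists x; rewrite !inE eqxx.
case: (ltnP i p) => [lt_ip|le_pi].
  rewrite ltnS (ltnW lt_ip); have := posX i; rewrite cardX lt_ip eq_sym.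
  move=> /eqP/existsP [y Xyi]; rewrite eq_sym eqb_id.
  by apply/existsP; exists y; rewrite !inE Xyi orbT.
have -> : (i < p.+1) = false.
  by apply/negbTE; rewrite -leqNgt ltn_neqAle le_pi andbT; apply: contra ne_ip => /eqP/val_inj ->.
rewrite eq_sym eqbF_neg; apply/negP => /existsP [y]; rewrite !inE.
case/orP => [/eqP [_ eip]|Xyi]; first by rewrite eip eqxx in ne_ip.
have : i < #|X| by rewrite (eqP (posX i)); apply/existsP; exists y.
by rewrite cardX ltnNge le_pi.
Qed.

Lemma card_lists_in_last S x (p : 'I_n) : x \in S ->
  #|[set X in lists_in S p.+1 | (x, p) \in X]| = #|lists_in (S :\ x) p|.
Proof.
move=> xS; set A := [set X in _ | _].
rewrite -(@card_in_imset _ _ (fun X => X :\ (x, p)) A); last first.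
  move=> X1 X2; rewrite !inE => /andP [_ X1xp] /andP [_ X2xp] eX.
  by rewrite -(setD1K X1xp) -(setD1K X2xp) eX.
apply: eq_card => X'; apply/imsetP/idP => [[X]|].
  rewrite !inE => /andP [/and3P [LX /eqP cardX sub_XS] Xxp] ->.
  case/and3P: (is_list_remove_last LX cardX Xxp) => -> -> sub_X' /=.
  exact: subset_trans sub_X' (setSD _ sub_XS).
rewrite !inE => /and3P [LX' /eqP cardX' sub_X'S].
have xX' : x \notin elems X' by apply/negP => /(subsetP sub_X'S); rewrite !inE eqxx.
case/and3P: (is_list_add_last LX' cardX' xX') => LX cardX /eqP elemsX.
exists ((x, p) |: X'); last first.
  by rewrite setU1K //; apply: contra xX' => X'xp; apply/imsetP; exists (x, p).
rewrite /A !inE LX cardX elemsX eqxx /= andbT; apply/subsetP => y; rewrite !inE.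
by case/orP => [/eqP -> //|/(subsetP sub_X'S)]; rewrite !inE => /andP [].
Qed.

Lemma card_lists_in_split S (p : 'I_n) :
  #|lists_in S p.+1| = \sum_(x in S) #|[set X in lists_in S p.+1 | (x, p) \in X]|.
Proof.
rewrite -sum1_card.
transitivity (\sum_(X in lists_in S p.+1) \sum_(x in S) (((x, p) \in X) : nat)).
  apply: eq_bigr => X; rewrite inE => /and3P [LX /eqP cardX sub_XS].
  rewrite sum_nat_bool; apply/esym/eqP; rewrite eqn_leq; apply/andP; split.
    apply/card_le1_eqP => a b; rewrite !inE => /andP [_ Xap] /andP [_ Xbp].
    by rewrite (list_elem_uniq LX Xap Xbp).
  rewrite card_gt0; apply/set0Pn.
  case/andP: LX => _ /forallP /(_ p); rewrite cardX ltnSn eq_sym eqb_id.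
  case/existsP => y Xyp; exists y; rewrite !inE Xyp andbT.
  by apply: (subsetP sub_XS); apply/imsetP; exists (y, p).
rewrite exchange_big /=; apply: eq_bigr => x _; rewrite sum_nat_bool.
by apply: eq_card => X; rewrite !inE.
Qed.

Lemma card_lists_in S j : #|lists_in S j| = #|S| ^_ j.
Proof.
elim: j S => [|j IHj] S.
  rewrite ffactn0; apply/eqP/cards1P; exists set0; apply/setP => X.
  rewrite !inE; apply/idP/idP => [/and3P [_ /eqP /cards0_eq -> _] //|/eqP ->].
  rewrite cards0 eqxx /= /elems imset0 sub0set andbT; apply/andP; split; apply/forallP.
    move=> x; rewrite (_ : [set i | (x, i) \in set0] = set0) ?cards0 //.
    by apply/setP => i; rewrite !inE.
  by move=> i; rewrite cards0 ltn0 eq_sym eqbF_neg; apply/negP => /existsP [y]; rewrite inE.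
have [lt_Sj|le_jS] := ltnP #|S| j.+1.
  rewrite ffact_small //; apply/eqP; rewrite cards_eq0; apply/eqP/setP => X.
  rewrite !inE; apply/negP => /and3P [LX /eqP cardX sub_XS].
  by move: (subset_leq_card sub_XS); rewrite card_elems // cardX leqNgt lt_Sj.
have lt_jn : j < n by rewrite (leq_trans le_jS) // (leq_trans (max_card _)) ?card_ord.
rewrite (card_lists_in_split S (Ordinal lt_jn)) (eq_bigr (fun _ => #|S|.-1 ^_ j)).
  by rewrite sum_nat_const ffactnS.
by move=> x xS; rewrite card_lists_in_last //= IHj (cardsD1 x S) xS.
Qed.
End Lists.

Section ListPartitions.
Variables (n : nat) (R : pred nat).
Local Notation T := ('I_n * 'I_n)%type.
Implicit Types (X : {set T}) (Q : {set {set T}}) (S : {set 'I_n}).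

Definition blocks_at Q (y : 'I_n) : nat :=
  #|[set Y in Q | [exists i : 'I_n, (y, i) \in Y]]|.

Definition list_partitions_of S k : {set {set {set T}}} :=
  [set P : {set {set T}} |
    [&& #|P| == k,
        [forall X in P, is_list_on X && R #|X|] &
        [forall x : 'I_n, blocks_at P x == (x \in S)]]].

Lemma blocks_at0 y : blocks_at set0 y = 0.
Proof. by apply/eqP; rewrite cards_eq0; apply/eqP/setP => Y; rewrite !inE. Qed.

Lemma blocks_atU1 Q X y :
  X \notin Q -> blocks_at (X |: Q) y = (y \in elems X) + blocks_at Q y.
Proof.
move=> XQ; rewrite /blocks_at (cardsD1 X) !inE eqxx /= mem_elems; congr (_ + _).
apply: eq_card => Y; rewrite !inE; have [->|//] := eqVneq Y X.
by rewrite (negPf XQ).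
Qed.

Lemma card_list_partitions_of0 S : #|list_partitions_of S 0| = (#|S| == 0).
Proof.
have [->|[x xS]] := set_0Vmem S.
  rewrite cards0 eqxx; apply/eqP/cards1P; exists set0; apply/setP => P.
  rewrite !inE; apply/idP/idP => [/and3P [/eqP /cards0_eq -> _ _] //|/eqP ->].
  rewrite cards0 eqxx /=; apply/andP; split; apply/forallP => x; first by rewrite inE.
  by rewrite blocks_at0 inE.
have /negPf -> : #|S| != 0 by rewrite -lt0n card_gt0; apply/set0Pn; exists x.
apply/eqP; rewrite cards_eq0; apply/eqP/setP => P; rewrite !inE.
apply/negP => /and3P [/eqP /cards0_eq -> _ /forallP /(_ x)].
by rewrite blocks_at0 xS.
Qed.

Definition blocks_in S : {set {set T}} :=
  [set X | [&& is_list_on X, R #|X| & elems X \subset S]].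

Lemma list_notin_partition_setD S k X P : is_list_on X ->
  P \in list_partitions_of (S :\: elems X) k -> X \notin P.
Proof.
rewrite is_list_onE card_gt0 => /andP [/set0Pn [[a i] Xai] _].
have aX : a \in elems X by rewrite mem_elems; apply/existsP; exists i.
rewrite inE => /and3P [_ _ /forallP /(_ a)]; rewrite !inE aX eqn0Ngt card_gt0.
apply: contraNN => PX; apply/set0Pn; exists X; rewrite !inE PX.
by apply/existsP; exists i.
Qed.

Lemma card_list_partitions_of_block S k X : X \in blocks_in S ->
  #|[set P in list_partitions_of S k.+1 | X \in P]| =
  #|list_partitions_of (S :\: elems X) k|.
Proof.
rewrite inE => /and3P [LX RX sub_XS]; set A := [set P in _ | _].
rewrite -(@card_in_imset _ _ (fun P => P :\ X) A); last first.
  move=> P1 P2; rewrite !inE => /andP [_ P1X] /andP [_ P2X] eP.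
  by rewrite -(setD1K P1X) -(setD1K P2X) eP.
apply: eq_card => P'; apply/imsetP/idP => [[P]|].
  rewrite !inE => /andP [/and3P [/eqP cardP blocksP /forallP partP] PX] ->.
  apply/and3P; split.
  - by move: cardP; rewrite (cardsD1 X) PX add1n => -[->].
  - by apply/forall_inP => Y; rewrite !inE => /andP [_ /(forall_inP blocksP)].
  apply/forallP => y; have := partP y.
  rewrite -{1}(setD1K PX) blocks_atU1 ?setD11 // !inE.
  case: (boolP (y \in elems X)) => [yX|_] /=.
    by rewrite (subsetP sub_XS _ yX) add1n eqSS.
  by rewrite add0n.
move=> P'part; have P'X := list_notin_partition_setD LX P'part.
move: P'part; rewrite !inE => /and3P [/eqP cardP' blocksP' /forallP partP'].
exists (X |: P'); last by rewrite setU1K.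
rewrite /A inE setU11 andbT inE; apply/and3P; split.
- by rewrite cardsU1 P'X cardP'.
- apply/forall_inP => Y; rewrite !inE => /orP [/eqP -> |P'Y]; first by rewrite LX RX.
  exact: (forall_inP blocksP').
apply/forallP => y; have := partP' y.
rewrite blocks_atU1 // !inE; case: (boolP (y \in elems X)) => [yX|_] /=.
  by move=> /eqP ->; rewrite (subsetP sub_XS _ yX).
by rewrite add0n.
Qed.

(* Double counting of pairs (P, X) with X a block of P. *)
Lemma card_list_partitions_ofS S k :
  #|list_partitions_of S k.+1| * k.+1 =
  \sum_(X in blocks_in S) #|list_partitions_of (S :\: elems X) k|.
Proof.
transitivity (\sum_(P in list_partitions_of S k.+1) \sum_(X in P) 1).
  rewrite -sum_nat_const; apply: eq_bigr => P; rewrite inE => /and3P [/eqP <- _ _].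
  by rewrite sum1_card.
rewrite (exchange_big_dep (mem (blocks_in S))) /=; last first.
  move=> P X; rewrite inE => /and3P [_ blocksP /forallP partP] PX.
  have /andP [LX RX] := forall_inP blocksP X PX; rewrite inE LX RX /=.
  apply/subsetP => y; rewrite mem_elems => yX; have := partP y.
  case: (y \in S) => //; rewrite eqn0Ngt card_gt0 => /negP []; apply/set0Pn.
  by exists X; rewrite !inE PX.
apply: eq_bigr => X XS; rewrite -card_list_partitions_of_block // -sum1_card.
by apply: eq_bigl => P; rewrite !inE.
Qed.

Lemma card_blocks_in_size S j :
  #|[set X in blocks_in S | #|X| == j]| = ((0 < j) && R j) * #|lists_in S j|.
Proof.
case: (boolP ((0 < j) && R j)) => [/andP [j_gt0 Rj]|Rj] /=.
  rewrite mul1n; apply: eq_card => X; rewrite !inE is_list_onE.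
  apply/idP/idP => [/andP [/and3P [/andP [_ ->] _ ->] ->] //|/and3P [LX /eqP cardX ->]].
  by rewrite LX cardX eqxx j_gt0 Rj.
rewrite mul0n; apply/eqP; rewrite cards_eq0; apply/eqP/setP => X; rewrite !inE is_list_onE.
apply/negP => /andP [/and3P [/andP [X_gt0 _] RX _] /eqP cardX]; case/negP: Rj.
by rewrite -cardX X_gt0 RX.
Qed.

End ListPartitions.

Local Open Scope ring_scope.

Lemma sum_ord_extend (V : nmodType) (F : nat -> V) a b :
  (forall k, (a <= k)%N -> F k = 0) -> \sum_(k < a) F k = \sum_(k < a + b) F k.
Proof.
move=> F0; elim: b => [|b IHb]; first by rewrite addn0.
by rewrite addnS big_ord_recr /= -IHb F0 ?leq_addr // addr0.
Qed.

Section ListPartitionCount.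
Variables (V : comNzRingType) (n : nat) (R : pred nat) (f : {poly V}).
Hypotheses (f0 : f`_0 = 0) (fR : forall j, (0 < j)%N -> f`_j = (R j)%:R).
Implicit Types (S : {set 'I_n}) (F : nat -> V).

Lemma sum_blocks_in_size S F :
  \sum_(X in blocks_in R S) F #|X| =
  \sum_(j < n.+1) ((0 < j)%N && R j)%:R * (#|S| ^_ j)%:R * F j.
Proof.
have card_block_lt (X : {set 'I_n * 'I_n}) : X \in blocks_in R S -> (#|X| < n.+1)%N.
  by rewrite inE is_list_onE => /and3P [/andP [_ /card_list_leq]]; rewrite ltnS.
rewrite (partition_big (fun X : {set 'I_n * 'I_n} => inord #|X| : 'I_n.+1) predT) //=.
apply: eq_bigr => j _; rewrite -card_lists_in -natrM -card_blocks_in_size -sumr_const.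
rewrite mulr_suml; apply: eq_big => [X|X /andP [XS /eqP <-]]; last first.
  by rewrite mul1r inordK ?card_block_lt.
rewrite [in RHS]inE; apply: andb_id2l => /card_block_lt ltXn.
by rewrite -(inj_eq val_inj) /= inordK.
Qed.

Lemma card_list_partitions_of_coef k S :
  #|list_partitions_of R S k|%:R * k`!%:R = #|S|`!%:R * (f ^+ k)`_#|S| :> V.
Proof.
have fE j : f`_j = ((0 < j)%N && R j)%:R by case: j => [|j]; rewrite ?f0 ?fR.
elim: k S => [|k IHk] S.
  rewrite card_list_partitions_of0 expr0 coef1 fact0 mulr1.
  by case: eqP => [->|_]; rewrite ?fact0 ?mul1r ?mulr0.
have leSn : (#|S| <= n)%N by rewrite (leq_trans (max_card _)) ?card_ord.
set s := #|S|; pose F j := (s - j)`!%:R * (f ^+ k)`_(s - j) : V.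
transitivity (\sum_(X in blocks_in R S) F #|X|).
  rewrite factS natrM mulrA -natrM card_list_partitions_ofS natr_sum mulr_suml.
  apply: eq_bigr => X; rewrite inE is_list_onE => /and3P [/andP [_ LX] _ sub_XS].
  by rewrite IHk cardsD (setIidPr sub_XS) card_elems.
rewrite sum_blocks_in_size exprS coefM mulr_sumr.
have -> : n.+1 = (s.+1 + (n - s))%N by rewrite addSn subnKC.
rewrite -(@sum_ord_extend _ (fun j => ((0 < j)%N && R j)%:R * (s ^_ j)%:R * F j)).
  apply: eq_bigr => j _; rewrite fE /F.
  have <- : (s ^_ j * (s - j)`!)%N = s`! by rewrite ffact_fact // -ltnS.
  by rewrite natrM; ring.
by move=> j lt_sj; rewrite ffact_small // mulr0 mul0r.
Qed.

End ListPartitionCount.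

Lemma Lnk_coef (V : comNzRingType) (R : pred nat) (f : {poly V}) n k :
  f`_0 = 0 -> (forall j, (0 < j)%N -> f`_j = (R j)%:R) ->
  (Lnk R n k)%:R * k`!%:R = n`!%:R * (f ^+ k)`_n.
Proof.
move=> f0 fR; have := card_list_partitions_of_coef f0 fR k [set: 'I_n].
rewrite cardsT card_ord => <-; congr (_%:R * _); apply: eq_card => P.
by rewrite !inE; do 2 congr andb; apply: eq_forallb => x; rewrite in_setT.
Qed.

Section TruncatedSeries.
Variable V : comNzRingType.
Implicit Types p q : {poly V}.

Definition eqmodX (m : nat) p q : Prop := exists s, p - q = s * 'X^m.

Lemma eqmodX_refl m p : eqmodX m p p.
Proof. by exists 0; rewrite subrr mul0r. Qed.

Lemma eqmodX_sym m p q : eqmodX m p q -> eqmodX m q p.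
Proof. by case=> s Es; exists (- s); rewrite mulNr -Es opprB. Qed.

Lemma eqmodX_trans m p q u : eqmodX m p q -> eqmodX m q u -> eqmodX m p u.
Proof. by case=> s Es [t Et]; exists (s + t); rewrite mulrDl -Es -Et; ring. Qed.

Lemma eqmodXD m p q p' q' :
  eqmodX m p q -> eqmodX m p' q' -> eqmodX m (p + p') (q + q').
Proof. by case=> s Es [t Et]; exists (s + t); rewrite mulrDl -Es -Et; ring. Qed.

Lemma eqmodXN m p q : eqmodX m p q -> eqmodX m (- p) (- q).
Proof. by case=> s Es; exists (- s); rewrite mulNr -Es; ring. Qed.

Lemma eqmodXM m p q p' q' :
  eqmodX m p q -> eqmodX m p' q' -> eqmodX m (p * p') (q * q').
Proof.
case=> s Es [t Et]; exists (s * p' + q * t).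
rewrite -[p](subrK q) -[p'](subrK q') Es Et; ring.
Qed.

Lemma eqmodXX m p q k : eqmodX m p q -> eqmodX m (p ^+ k) (q ^+ k).
Proof.
move=> Epq; elim: k => [|k IHk]; first exact: eqmodX_refl.
by rewrite !exprS; apply: eqmodXM.
Qed.

Lemma eqmodX_sum m K (F G : nat -> {poly V}) :
  (forall i, eqmodX m (F i) (G i)) ->
  eqmodX m (\sum_(i < K) F i) (\sum_(i < K) G i).
Proof.
move=> EFG; elim: K => [|K IHK]; first by rewrite !big_ord0; apply: eqmodX_refl.
by rewrite !big_ord_recr; apply: eqmodXD.
Qed.

Lemma eqmodX_mulX m p q : eqmodX m p q -> eqmodX m.+1 ('X * p) ('X * q).
Proof. by case=> s Es; exists s; rewrite -mulrBr Es exprS; ring. Qed.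

Lemma eqmodX_leq m m' p q : (m' <= m)%N -> eqmodX m p q -> eqmodX m' p q.
Proof.
move=> le_m'm [s Es]; exists (s * 'X^(m - m')).
by rewrite Es -mulrA -exprD subnK.
Qed.

Lemma eqmodX_coef m p q i : eqmodX m p q -> (i < m)%N -> p`_i = q`_i.
Proof.
by case=> s Es lt_im; apply/eqP; rewrite -subr_eq0 -coefB Es coefMXn lt_im.
Qed.

Lemma eqmodX0_exp m q : eqmodX 1 q 0 -> eqmodX m (q ^+ m) 0.
Proof. by case=> s; rewrite subr0 expr1 => ->; exists (s ^+ m); rewrite subr0 exprMn. Qed.

End TruncatedSeries.

Section AlternatingSeries.
Variable V : numDomainType.
Implicit Types p q : {poly V}.

Definition alternating p : Prop := forall i, 0 <= (-1) ^+ i * p`_i.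

Lemma alternating0 : alternating 0.
Proof. by move=> i; rewrite coef0 mulr0. Qed.

Lemma alternating1 : alternating 1.
Proof. by case=> [|i]; rewrite coefC /= ?mulr1 ?mulr0. Qed.

Lemma alternatingD p q : alternating p -> alternating q -> alternating (p + q).
Proof. by move=> Ap Aq i; rewrite coefD mulrDr addr_ge0. Qed.

Lemma alternatingZ (c : V) p : 0 <= c -> alternating p -> alternating (c *: p).
Proof. by move=> c_ge0 Ap i; rewrite coefZ mulrCA mulr_ge0. Qed.

Lemma alternatingM p q : alternating p -> alternating q -> alternating (p * q).
Proof.
move=> Ap Aq i; rewrite coefM mulr_sumr; apply: sumr_ge0 => j _.
have -> : (-1) ^+ i = (-1) ^+ j * (-1) ^+ (i - j) :> V.
  by rewrite -exprD subnKC // -ltnS.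
by rewrite mulrACA mulr_ge0.
Qed.

Lemma alternatingX p k : alternating p -> alternating (p ^+ k).
Proof.
move=> Ap; elim: k => [|k IHk]; first exact: alternating1.
by rewrite exprS; apply: alternatingM.
Qed.

Lemma alternating_sum K (F : nat -> {poly V}) :
  (forall i, alternating (F i)) -> alternating (\sum_(i < K) F i).
Proof.
move=> AF; elim: K => [|K IHK]; first by rewrite big_ord0; apply: alternating0.
by rewrite big_ord_recr; apply: alternatingD.
Qed.

Lemma alternatingN_mulX p : alternating p -> alternating (- ('X * p)).
Proof.
move=> Ap [|i]; first by rewrite coefN coefXM oppr0 mulr0.
by rewrite coefN coefXM /= exprS mulN1r mulrNN.
Qed.

Lemma alternatingN_exp_coef p k n : alternating (- p) -> (k <= n)%N ->
  0 <= (-1) ^+ (n - k) * (p ^+ k)`_n.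
Proof.
move=> Ap le_kn; have := alternatingX k Ap n.
have -> : (- p) ^+ k = ((-1) ^+ k)%:P * p ^+ k.
  by rewrite [LHS]exprNn polyC_exp polyCN polyC1.
rewrite coefCM mulrA -exprD.
have -> : (n + k = n - k + k.*2)%N by rewrite -addnn addnA subnK.
by rewrite exprD -[(-1) ^+ k.*2]signr_odd odd_double mulr1.
Qed.

End AlternatingSeries.

Section CompositionalInverse.
Variables (V : numDomainType) (r K : nat).
Implicit Types e : {poly V}.
Let c : V := (-1) ^+ r.

(* phi(e), each geometric series cut after K terms *)
Definition approx_recip e : {poly V} :=
  (\sum_(i < r) e ^+ i + (1 - c)%:P * (e ^+ r * \sum_(i < K) e ^+ i))
  * \sum_(m < K) (e ^+ r * e ^+ r) ^+ m.

Lemma alternating_approx_recip e : alternating e -> alternating (approx_recip e).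
Proof.
have c_le1 : c <= 1.
  by rewrite /c -signr_odd; case: (odd r); rewrite ?expr1 ?expr0 // (le_trans (lerN10 _)).
move=> Ae; apply: alternatingM; last first.
  by apply: alternating_sum => i; apply/alternatingX/alternatingM; apply: alternatingX.
apply: alternatingD; first by apply: alternating_sum => i; apply: alternatingX.
rewrite mul_polyC; apply: alternatingZ; first by rewrite subr_ge0.
by apply: alternatingM; [apply: alternatingX | apply: alternating_sum => i; apply: alternatingX].
Qed.

Lemma eqmodX_approx_recip m e e' :
  eqmodX m e e' -> eqmodX m (approx_recip e) (approx_recip e').
Proof.
move=> E; apply: eqmodXM; last first.
  by apply: eqmodX_sum => i; apply: eqmodXX; apply: eqmodXM; apply: eqmodXX.
apply: eqmodXD; first by apply: eqmodX_sum => i; apply: eqmodXX.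
apply: eqmodXM; first exact: eqmodX_refl.
by apply: eqmodXM; [apply: eqmodXX | apply: eqmodX_sum => i; apply: eqmodXX].
Qed.

Hypothesis r_gt0 : (0 < r)%N.

Lemma approx_recipP e :
  exists W, (1 - e) * (1 + c%:P * e ^+ r) * approx_recip e = 1 - e ^+ K * W.
Proof.
have geom (x : {poly V}) n : (1 - x) * \sum_(i < n) x ^+ i = 1 - x ^+ n.
  by rewrite -opprB mulNr -subrX1 opprB.
set A := \sum_(i < r) e ^+ i; set B := \sum_(i < K) e ^+ i.
set C := \sum_(m < K) (e ^+ r * e ^+ r) ^+ m.
have cc : c%:P * c%:P = 1 :> {poly V}.
  by rewrite -polyCM /c -exprD -signr_odd addnn odd_double.
have er2K : (e ^+ r * e ^+ r) ^+ K = e ^+ K * (e ^+ r.-1 * e ^+ r) ^+ K.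
  by rewrite -{1}(prednK r_gt0) exprS -mulrA exprMn.
exists ((e ^+ r.-1 * e ^+ r) ^+ K + (1 + c%:P * e ^+ r) * (1 - c%:P) * e ^+ r * C).
have -> : (1 - e) * (1 + c%:P * e ^+ r) * approx_recip e
  = (1 + c%:P * e ^+ r) * ((1 - e) * A + (1 - c%:P) * (e ^+ r * ((1 - e) * B))) * C.
  by rewrite /approx_recip -/A -/B -/C polyCB; ring.
rewrite !geom.
have -> : (1 + c%:P * e ^+ r) * (1 - e ^+ r + (1 - c%:P) * (e ^+ r * (1 - e ^+ K))) * C
  = (1 - (c%:P * c%:P) * (e ^+ r * e ^+ r)) * C
    - (1 + c%:P * e ^+ r) * (1 - c%:P) * e ^+ r * e ^+ K * C by ring.
by rewrite cc mul1r geom er2K; ring.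
Qed.

Fixpoint inverse_iter (j : nat) : {poly V} :=
  if j is j'.+1 then 'X * approx_recip (- inverse_iter j') else 0.

Lemma alternatingN_inverse_iter j : alternating (- inverse_iter j).
Proof.
elim: j => [|j IHj] /=; first by rewrite oppr0; apply: alternating0.
exact/alternatingN_mulX/alternating_approx_recip.
Qed.

Lemma inverse_iter_eqmodX0 j : eqmodX 1 (inverse_iter j) 0.
Proof.
case: j => [|j]; first exact: eqmodX_refl.
by exists (approx_recip (- inverse_iter j)); rewrite subr0 mulrC.
Qed.

Lemma inverse_iterS j : eqmodX j (inverse_iter j.+1) (inverse_iter j).
Proof.
elim: j => [|j IHj]; first by exists (inverse_iter 1 - inverse_iter 0); rewrite mulr1.
exact/eqmodX_mulX/eqmodX_approx_recip/eqmodXN.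
Qed.

End CompositionalInverse.

Definition Rset_egf (V : nzRingType) (r : nat) : {poly V} :=
  'X + 'X^2 + 'X^(r.+1) + 'X^(r.+2).

Lemma alternating_inverse_Rset_egf (V : numDomainType) (r m : nat) :
  (0 < r)%N -> exists g : {poly V},
  [/\ alternating (- g), eqmodX 1 g 0 & eqmodX m (Rset_egf V r \Po g) 'X].
Proof.
move=> r_gt0; set g := inverse_iter V r m.+1 m.+1.
exists g; split; [exact: alternatingN_inverse_iter | exact: inverse_iter_eqmodX0 |].
have [W EW] := approx_recipP m.+1 r_gt0 (- g).
set c : V := (-1) ^+ r; set a := approx_recip r m.+1 (- g).
have ga : eqmodX m.+1 g ('X * a) by apply/eqmodX_sym/inverse_iterS.
have fg : Rset_egf V r \Po g = g * ((1 - - g) * (1 + c%:P * (- g) ^+ r)).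
  rewrite /Rset_egf !comp_polyD comp_polyX !comp_Xn_poly.
  have -> : c%:P * (- g) ^+ r = g ^+ r.
    rewrite /c polyC_exp polyCN polyC1 [(- g) ^+ r]exprNn mulrA -exprD addnn.
    by rewrite -signr_odd odd_double mul1r.
  by rewrite opprK !exprS; ring.
have [s Es] := inverse_iter_eqmodX0 V r m.+1 m.+1; rewrite subr0 -/g in Es.
apply: (eqmodX_leq (leqnSn m)); rewrite fg.
apply: (@eqmodX_trans _ _ _ ('X * a * ((1 - - g) * (1 + c%:P * (- g) ^+ r)))).
  exact: eqmodXM ga (eqmodX_refl _ _).
rewrite mulrAC -mulrA EW.
have -> : (- g) ^+ m.+1 = (- s) ^+ m.+1 * 'X^(m.+1) by rewrite Es expr1 -mulNr exprMn.
exists (- ((- s) ^+ m.+1 * W * 'X)).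
by rewrite exprS; ring.
Qed.

Section CompositionCoefficients.
Variable V : comNzRingType.
Implicit Types p q f g : {poly V}.

Lemma coef_comp_poly_leq p q B i : eqmodX 1 q 0 -> (i < B)%N ->
  (p \Po q)`_i = \sum_(k < B) p`_k * (q ^+ k)`_i.
Proof.
move=> q0 lt_iB; pose F k := p`_k * (q ^+ k)`_i.
rewrite coef_comp_poly (@sum_ord_extend _ F (size p) B) => [|k le_pk]; last first.
  by rewrite /F nth_default // mul0r.
rewrite addnC -(@sum_ord_extend _ F B (size p)) // => k le_Bk.
by rewrite /F (eqmodX_coef (eqmodX0_exp k q0)) ?coef0 ?mulr0 // (leq_trans lt_iB).
Qed.

(* Coefficients of x^(i+1) in (f o g)^(j+1) = x^(j+1) (mod x^(m+2)). *)
Lemma sum_coef_exp_comp f g m i j : eqmodX 1 g 0 -> eqmodX m.+2 (f \Po g) 'X ->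
  (i <= m)%N -> (j <= m)%N ->
  \sum_(k < m.+1) (g ^+ k.+1)`_i.+1 * (f ^+ j.+1)`_k.+1 = (i == j)%:R.
Proof.
move=> g0 fg le_im le_jm.
have := coef_comp_poly_leq (f ^+ j.+1) g0 (le_im : (i.+1 < m.+2)%N).
rewrite big_ord_recl expr0 coefC /= mulr0 add0r rmorphXn.
rewrite (eqmodX_coef (eqmodXX j.+1 fg)) ?ltnS // coefXn eqSS => ->.
by apply: eq_bigr => k _; rewrite mulrC.
Qed.

End CompositionCoefficients.

Definition exp_riordan_mx (g : {poly rat}) (m : nat) : 'M[rat]_m.+1 :=
  \matrix_(i, k) ((i.+1)`!%:R / (k.+1)`!%:R * (g ^+ k.+1)`_i.+1).

Lemma invmx_Lmat (R : pred nat) (f g : {poly rat}) (m : nat) :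
  f`_0 = 0 -> (forall j, (0 < j)%N -> f`_j = (R j)%:R) ->
  eqmodX 1 g 0 -> eqmodX m.+2 (f \Po g) 'X ->
  invmx (Lmat R m) = exp_riordan_mx g m.
Proof.
move=> f0 fR g0 fg.
have fact_neq0 l : l`!%:R != 0 :> rat by rewrite pnatr_eq0 -lt0n fact_gt0.
have ML : exp_riordan_mx g m *m Lmat R m = 1%:M.
  apply/matrixP => i j; rewrite !mxE.
  transitivity (\sum_(k < m.+1) (i.+1)`!%:R / (j.+1)`!%:R *
      ((g ^+ k.+1)`_i.+1 * (f ^+ j.+1)`_k.+1)).
    apply: eq_bigr => k _; rewrite !mxE.
    have /(congr1 (fun x => x / (j.+1)`!%:R)) := Lnk_coef k.+1 j.+1 f0 fR.
    by rewrite mulfK // => ->; field; rewrite !fact_neq0.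
  rewrite -mulr_sumr sum_coef_exp_comp // -1?ltnS //.
  have [->|ne_ij] := eqVneq i j; first by rewrite eqxx mulr1 divff.
  by rewrite (inj_eq val_inj) (negPf ne_ij) mulr0.
by rewrite -[invmx _]mulmx1 -(mulmx1C ML) mulKmx // (mulmx1_unit ML).2.
Qed.

Lemma coef_Rset_egf (V : nzRingType) (r j : nat) : (2 <= r)%N ->
  (Rset_egf V r)`_j = (Rset r j)%:R.
Proof.
move=> r_ge2; rewrite /Rset_egf !coefD coefX !coefXn -!natrD /Rset !inE.
congr _%:R; case: (j =P 1) => ?; case: (j =P 2) => ?; case: (j =P r.+1) => ?;
  case: (j =P r.+2) => ? /=; lia.
Qed.

Theorem mainTheorem9 (r n k : nat) :
  (2 <= r)%N -> (1 <= n)%N -> (1 <= k)%N ->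
  0 <= (-1) ^+ (n - k) * Linv (Rset r) n k.
Proof.
move=> r_ge2 n_ge1 k_ge1; rewrite /Linv k_ge1 /=.
have [le_kn|_] := leqP k n; last by rewrite mulr0.
case: n n_ge1 le_kn => [//|m] _ le_km.
have [g [Ag g0 fg]] := alternating_inverse_Rset_egf rat m.+2 (ltnW r_ge2).
have f0 : (Rset_egf rat r)`_0 = 0 by rewrite coef_Rset_egf.
rewrite (invmx_Lmat f0 (fun j _ => coef_Rset_egf rat j r_ge2) g0 fg) mxE.
rewrite !inordK ?prednK // ?(leq_trans _ le_km) // mulrCA.
by rewrite mulr_ge0 ?divr_ge0 ?ler0n // alternatingN_exp_coef.
Qed.
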